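(* Let $a\ge2$, $d\ge1$ and $s$ be integers with $\gcd(a,d)=1$ and $1\le s<a$, and put $b=a+sd$. Let $\mathit{NR}$ be the set of positive integers not representable as $\sum_{i=0}^s(a+id)x_i$ with $x_0,\dots,x_s$ nonnegative integers, and let $S_m=\sum_{n\in\mathit{NR}}n^m$. Then, as an identity of functions (equivalently of power series about $z=0$), \[ \sum_{m=0}^\infty S_m\frac{z^m}{m!}=\frac{e^{\lceil\frac{b-1}{s}\rceil az}-1}{(e^{dz}-1)(e^{az}-1)}+\frac{e^{\lceil\frac{a-1}{s}\rceil bz}-1}{(e^{-dz}-1)(e^{bz}-1)}-\frac{1}{e^z-1}. \]
   Context: $\lceil x\rceil$ is the least integer not less than $x$. *)

From HB Require Import structures.
From mathcomp Require Import all_boot all_order all_algebra.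
From mathcomp Require Import all_classical all_reals all_analysis.
Set Implicit Arguments. Unset Strict Implicit. Unset Printing Implicit Defensive.
Import Order.TTheory GRing.Theory Num.Theory.
Import numFieldNormedType.Exports.
Local Open Scope classical_set_scope.
Local Open Scope ring_scope.

Definition representable (a d s n : nat) : Prop :=
  exists x : nat -> nat, n = (\sum_(i < s.+1) (a + i * d) * x i)%N.

Definition NR (a d s : nat) : set nat :=
  [set n | (0 < n)%N /\ ~ representable a d s n].

Definition Spow (R : realType) (a d s m : nat) : R :=
  \sum_(n \in NR a d s) (n%:R : R) ^+ m.

From HB Require Import structures.
From mathcomp Require Import all_boot all_order all_algebra.
From mathcomp Require Import all_classical all_reals all_analysis.
From mathcomp Require Import zify ring.

(* A number is representable iff it is [k a + e d] with [e <= k s], so in the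
   residue class of [j d] modulo [a] (for [j < a]) the representable numbers
   are exactly those [>= ceil(j/s) a + j d].  Telescoping along [n -> n + a]
   gives, for the gap polynomial [G(x) = sum_(n in NR) x^n],
     [(1 - x)(1 - x^a) G(x) = (1 - x^a) - (1 - x) sum_(j < a) x^(ceil(j/s) a + j d)],
   and grouping the last sum into blocks of [s] consecutive [j] makes it a
   rational function of [x].  At [x = e^z], [G] is the exponential generating
   function of the power sums [S_m]. *)

Set Implicit Arguments.
Unset Strict Implicit.
Unset Printing Implicit Defensive.
Import Order.TTheory GRing.Theory Num.Theory.
Import numFieldNormedType.Exports.
Local Open Scope classical_set_scope.
Local Open Scope ring_scope.

Definition cdivn (m d : nat) : nat := ((m + d.-1) %/ d)%N.

Section CeilingDivision.
Variable d : nat.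
Hypothesis d_gt0 : (0 < d)%N.

Lemma leq_cdivnLR m k : (cdivn m d <= k)%N = (m <= k * d)%N.
Proof. by rewrite /cdivn -ltnS ltn_divLR // mulSn; apply/idP/idP; lia. Qed.

Lemma leq_mul_cdivn m : (m <= cdivn m d * d)%N.
Proof. by rewrite -leq_cdivnLR. Qed.

Lemma leq_cdivn m : (cdivn m d <= m)%N.
Proof. by rewrite leq_cdivnLR leq_pmulr. Qed.

Lemma cdiv0n : cdivn 0 d = 0%N.
Proof. by apply/eqP; rewrite -leqn0 leq_cdivnLR. Qed.

Lemma cdivnMDl q m : cdivn (q * d + m) d = (q + cdivn m d)%N.
Proof. by rewrite /cdivn -addnA divnMDl. Qed.

Lemma cdivnS m : cdivn m.+1 d = (cdivn m d + (m == cdivn m d * d))%N.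
Proof.
have le_m := leq_mul_cdivn m.
case: eqP => [m_eq | m_neq]; apply/eqP; rewrite eqn_leq leq_cdivnLR.
- rewrite addn1; apply/andP; split; first by rewrite mulSn; lia.
  by rewrite ltnNge leq_cdivnLR -m_eq ltnn.
- rewrite addn0 ltn_neqAle (introN eqP m_neq) le_m /= leq_cdivnLR.
  exact: leq_trans (leqnSn m) (leq_mul_cdivn m.+1).
Qed.

Lemma ceil_natr_div (R : archiFieldType) m :
  Num.ceil (m%:R / d%:R : R) = (cdivn m d)%:Z.
Proof.
have d_pos : (0 : R) < d%:R by rewrite ltr0n.
apply: ceil_def.
rewrite ler_pdivrMr // ltr_pdivlMr // -natrM ler_nat leq_mul_cdivn andbT.
rewrite rmorphB /= mulrBl mul1r ltrBlDr -natrM -natrD ltr_nat /cdivn.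
have := leq_trunc_div (m + d.-1) d; lia.
Qed.

End CeilingDivision.

Lemma sum_cdivn_powers (R : comPzRingType) s (e f : R) n : (0 < s)%N ->
  (1 - f) * \sum_(j < n.+1) e ^+ cdivn j s * f ^+ j =
  1 - f ^+ n.+1 * e ^+ cdivn n s + f * (e - 1) * \sum_(m < cdivn n s) (e * f ^+ s) ^+ m.
Proof.
move=> s_gt0; elim: n => [|n IHn].
  by rewrite big_ord1 cdiv0n // big_ord0; ring.
rewrite big_ord_recr mulrDr IHn cdivnS //=; case: eqP => [n_eq | _].
  rewrite addn1 big_ord_recr /= exprMn -exprM mulnC -n_eq !exprS; ring.
by rewrite addn0 !exprS; ring.
Qed.

Lemma first_in_class_indicator (R : pzRingType) (a n w : nat) :
  (0 < a)%N -> (w = n %[mod a])%N ->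
  ((w <= n)%N%:R - ((a <= n)%N && (w <= n - a)%N)%:R : R) = (n == w)%:R.
Proof.
move=> a_gt0 w_eq_n; case: (ltngtP n w) => [lt_nw | lt_wn | ->].
- have -> : (w <= n - a)%N = false by apply/negbTE; lia.
  by rewrite andbF subrr.
- have le_a : (a <= n - w)%N.
    by apply: dvdn_leq; [rewrite subn_gt0 | rewrite -eqn_mod_dvd 1?ltnW // w_eq_n].
  have [-> ->] : (a <= n)%N /\ (w <= n - a)%N by split; lia.
  by rewrite subrr.
- have -> : (a <= w)%N && (w <= w - a)%N = false by apply/negbTE; lia.
  by rewrite subr0.
Qed.

Section Representability.
Variables a d s : nat.
Hypotheses (a_gt0 : (0 < a)%N) (s_gt0 : (0 < s)%N).

Definition apery j := (cdivn j s * a + j * d)%N.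

Definition representableb n :=
  [exists j : 'I_a, (j * d == n %[mod a])%N && (apery j <= n)%N].

Lemma representable_add_generator n i : (i <= s)%N -> representable a d s n ->
  representable a d s (n + (a + i * d)).
Proof.
move=> le_is [x ->]; exists (fun l => x l + (l == i :> nat))%N.
under [X in _ = X]eq_bigr do rewrite mulnDr.
rewrite big_split /=; congr (_ + _)%N.
rewrite (bigD1 (Ordinal (le_is : (i < s.+1)%N))) //= eqxx muln1.
rewrite big1 ?addn0 // => l /eqP ne_li; rewrite (introF eqP) ?muln0 // => eq_li.
by apply: ne_li; apply: val_inj.
Qed.

Lemma representable_lincomb k e : (e <= k * s)%N ->
  representable a d s (k * a + e * d).
Proof.
elim: k e => [|k IHk] e le_e.
  move: le_e; rewrite mul0n leqn0 => /eqP ->.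
  by exists (fun=> 0%N); rewrite big1 // => i; rewrite muln0.
set i := minn e s; have le_ie : (i <= e)%N := geq_minl e s.
have le_rest : (e - i <= k * s)%N by move: le_e; rewrite mulSn /i; lia.
suff -> : (k.+1 * a + e * d = k * a + (e - i) * d + (a + i * d))%N.
  exact: representable_add_generator (geq_minr e s) (IHk _ le_rest).
by rewrite mulSn mulnBl; have := leq_mul le_ie (leqnn d); lia.
Qed.

Lemma representable_decomp n : representable a d s n ->
  exists k e, (e <= k * s)%N /\ n = (k * a + e * d)%N.
Proof.
move=> [x ->]; exists (\sum_(i < s.+1) x i)%N, (\sum_(i < s.+1) i * x i)%N; split.
  rewrite big_distrl /=; apply: leq_sum => i _.
  by rewrite mulnC leq_mul2l -ltnS ltn_ord orbT.
by rewrite !big_distrl -big_split /=; apply: eq_bigr => i _; rewrite mulnDl; lia.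
Qed.

Lemma representableP n : reflect (representable a d s n) (representableb n).
Proof.
apply: (iffP existsP) => [[j /andP[/eqP jd_n le_n]] | ].
  have /dvdnP[t n_eq] : (a %| n - apery j)%N.
    by rewrite -eqn_mod_dvd // /apery modnMDl jd_n.
  have -> : n = ((cdivn j s + t) * a + j * d)%N.
    by move: n_eq le_n; rewrite /apery mulnDl; lia.
  apply: representable_lincomb; apply: leq_trans (leq_mul_cdivn s_gt0 j) _.
  by rewrite leq_mul2r leq_addr orbT.
move=> /representable_decomp[k [e [le_e ->]]].
exists (Ordinal (ltn_pmod e a_gt0)); rewrite /= modnMml modnMDl eqxx /apery leq_add //.
  by rewrite leq_mul2r leq_cdivnLR // (leq_trans (leq_mod _ _) le_e) orbT.
by rewrite leq_mul2r leq_mod orbT.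
Qed.

Lemma apery_lt (j : 'I_a) : (apery j < a * (a + d))%N.
Proof.
rewrite /apery mulnDr -addSn leq_add ?leq_mul2r ?(ltnW (ltn_ord j)) ?orbT //.
by rewrite mulnC (leq_ltn_trans (leq_mul (leqnn a) (leq_cdivn s_gt0 j))) // ltn_pmul2l.
Qed.

Lemma representableb0 : representableb 0.
Proof.
by apply/existsP; exists (Ordinal a_gt0); rewrite /apery cdiv0n // !mul0n eqxx.
Qed.

Hypothesis coprime_ad : coprime a d.

Lemma residue_inj (i j : 'I_a) : (i * d = j * d %[mod a])%N -> i = j.
Proof.
wlog le_ji : i j / (j <= i)%N.
  by move=> wlog_le ij; case: (leqP j i) => [|/ltnW] le; [|apply/esym]; apply: wlog_le.
move/eqP; rewrite eqn_mod_dvd ?leq_mul2r ?le_ji ?orbT // -mulnBl Gauss_dvdl // => dvd_a.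
apply: val_inj => /=; have := ltn_ord i; have := ltn_ord j.
by case: (posnP (i - j)) => [|/dvdn_leq/(_ dvd_a)]; lia.
Qed.

Lemma residue_exists n : exists j : 'I_a, (j * d = n %[mod a])%N.
Proof.
pose mul_d (j : 'I_a) := Ordinal (ltn_pmod (j * d) a_gt0).
have /injF_bij[div_d _ mul_dK] : injective mul_d.
  by move=> i j /(congr1 val) /= /residue_inj.
exists (div_d (Ordinal (ltn_pmod n a_gt0))).
by have /(congr1 val) /= -> := mul_dK (Ordinal (ltn_pmod n a_gt0)).
Qed.

Lemma representableb_residue n (j : 'I_a) :
  (j * d = n %[mod a])%N -> representableb n = (apery j <= n)%N.
Proof.
move=> jd_n; apply/existsP/idP => [[i /andP[/eqP id_n]] | le_n]; last first.
  by exists j; rewrite jd_n eqxx.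
by rewrite (residue_inj (etrans id_n (esym jd_n))).
Qed.

Lemma representableb_large n : (a * (a + d) <= n)%N -> representableb n.
Proof.
move=> le_n; have [j /representableb_residue ->] := residue_exists n.
exact: ltnW (leq_trans (apery_lt j) le_n).
Qed.

Lemma representableb_stepE (R : pzRingType) n :
  ((representableb n)%:R - ((a <= n)%N && representableb (n - a))%:R : R)
  = \sum_(j < a) (n == apery j)%:R.
Proof.
have [j jd_n] := residue_exists n.
rewrite (bigD1 j) //= big1 ?addr0 => [|i ne_ij]; last first.
  case: eqP => // n_eq; case/eqP: ne_ij; apply: residue_inj.
  by rewrite jd_n n_eq /apery modnMDl.
have apery_n : (apery j = n %[mod a])%N by rewrite /apery modnMDl.
rewrite (representableb_residue jd_n) -(first_in_class_indicator R a_gt0 apery_n).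
congr (_ - _%:R); case: (leqP a n) => //= le_an.
by rewrite (representableb_residue (j := j)) // jd_n -{1}(subnK le_an) modnDr.
Qed.

Lemma geometric_sum_range (R : comPzRingType) (x : R) m k :
  (1 - x) * \sum_(m <= n < m + k) x ^+ n = x ^+ m - x ^+ (m + k).
Proof.
elim: k => [|k IHk]; first by rewrite addn0 big_geq // mulr0 subrr.
by rewrite addnS big_nat_recr ?leq_addr //= mulrDr IHk exprS; ring.
Qed.

Lemma representable_genpoly (R : comPzRingType) (x : R) L : (a * (a + d) <= L)%N ->
  (1 - x ^+ a) * \sum_(0 <= n < L) (representableb n)%:R * x ^+ n =
  \sum_(j < a) x ^+ apery j - \sum_(L <= n < L + a) x ^+ n.
Proof.
move=> le_L; set A := \sum_(0 <= n < L) _.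
have shift : \sum_(0 <= n < L + a) ((a <= n)%N && representableb (n - a))%:R * x ^+ n
    = x ^+ a * A.
  rewrite (big_cat_nat (n := a)) ?leq_addl //= big_nat_cond big1 ?add0r; last first.
    by move=> n /andP[/andP[_ lt_na] _]; rewrite leqNgt lt_na mul0r.
  rewrite -{1}[a]add0n big_addn addnK /A big_distrr /=; apply: eq_big_nat => n _.
  by rewrite leq_addl addnK exprD /=; ring.
have tail : \sum_(0 <= n < L + a) (representableb n)%:R * x ^+ n
    = A + \sum_(L <= n < L + a) x ^+ n.
  rewrite (big_cat_nat (n := L)) ?leq_addr //; congr (_ + _).
  apply: eq_big_nat => n /andP[le_Ln _].
  by rewrite representableb_large ?mul1r // (leq_trans le_L).
have apery_sum : \sum_(0 <= n < L + a) \sum_(j < a) (n == apery j)%:R * x ^+ n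
    = \sum_(j < a) x ^+ apery j.
  rewrite exchange_big; apply: eq_bigr => j _ /=.
  under eq_bigr do rewrite mulr_natl mulrb.
  rewrite -big_mkcond big_nat1_eq leq0n /= ifT //.
  by rewrite ltn_addr // (leq_trans (apery_lt j)).
have step : \sum_(0 <= n < L + a) (representableb n)%:R * x ^+ n
    - \sum_(0 <= n < L + a) ((a <= n)%N && representableb (n - a))%:R * x ^+ n
    = \sum_(j < a) x ^+ apery j.
  rewrite -apery_sum -sumrB; apply: eq_bigr => n _.
  by rewrite -mulrBl representableb_stepE big_distrl.
by rewrite -step tail shift; ring.
Qed.

Lemma gap_genpoly (R : comPzRingType) (x : R) L : (a * (a + d) <= L)%N ->
  (1 - x) * (1 - x ^+ a) * \sum_(0 <= n < L | ~~ representableb n) x ^+ n =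
  (1 - x ^+ a) - (1 - x) * \sum_(j < a) x ^+ apery j.
Proof.
move=> le_L.
have gaps_split : \sum_(0 <= n < L | ~~ representableb n) x ^+ n =
    \sum_(0 <= n < L) x ^+ n - \sum_(0 <= n < L) (representableb n)%:R * x ^+ n.
  rewrite big_mkcond -sumrB; apply: eq_bigr => n _.
  by case: (representableb n); rewrite /= ?mul1r ?mul0r ?subrr ?subr0.
have geo_L := geometric_sum_range x 0 L; rewrite add0n expr0 in geo_L.
rewrite gaps_split.
transitivity ((1 - x ^+ a) * ((1 - x) * \sum_(0 <= n < L) x ^+ n)
  - (1 - x) * ((1 - x ^+ a) * \sum_(0 <= n < L) (representableb n)%:R * x ^+ n)).
  by ring.
rewrite geo_L (representable_genpoly x le_L) (mulrBr (1 - x)).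
by rewrite geometric_sum_range exprD; ring.
Qed.

Lemma gap_genpoly_closed_form (F : fieldType) (x : F) L :
  (a * (a + d) <= L)%N ->
  x != 0 -> x != 1 -> x ^+ a != 1 -> x ^+ d != 1 -> x ^+ (a + s * d) != 1 ->
  \sum_(0 <= n < L | ~~ representableb n) x ^+ n =
    (x ^+ (cdivn (a + s * d - 1) s * a) - 1) / ((x ^+ d - 1) * (x ^+ a - 1))
  + (x ^+ (cdivn (a - 1) s * (a + s * d)) - 1)
      / (((x ^+ d)^-1 - 1) * (x ^+ (a + s * d) - 1))
  - 1 / (x - 1).
Proof.
move=> le_L x_neq0 x_neq1 xa_neq1 xd_neq1 xb_neq1.
have subr1_neq0 (y : F) : y != 1 -> 1 - y != 0 by rewrite subr_eq0 eq_sym.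
rewrite (canRL (mulKf _) (gap_genpoly x le_L)) ?mulf_neq0 ?subr1_neq0 //.
set W := \sum_(j < a) x ^+ apery j; set c := cdivn (a - 1) s.
set e := x ^+ a in xa_neq1 *; set f := x ^+ d in xd_neq1 *.
set g := x ^+ (a + s * d) in xb_neq1 *.
have f_neq0 : f != 0 by rewrite expf_neq0.
have g_eq : g = e * f ^+ s by rewrite /g exprD mulnC exprM.
have W_powers : W = \sum_(j < a) e ^+ cdivn j s * f ^+ j.
  apply: eq_bigr => j _.
  by rewrite /apery exprD mulnC exprM [(j * d)%N]mulnC exprM.
have := sum_cdivn_powers e f (a.-1) s_gt0.
rewrite prednK // -subn1 -/c -W_powers -g_eq => /(canRL (mulKf (subr1_neq0 _ xd_neq1))) ->.
have g1_neq0 : g - 1 != 0 by rewrite subr_eq0.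
rewrite (canRL (mulKf g1_neq0) (esym (subrX1 g c))).
have -> : cdivn (a + s * d - 1) s = (d + c)%N.
  by rewrite -cdivnMDl //; congr cdivn; lia.
have -> : x ^+ ((d + c) * a) = f ^+ a * e ^+ c.
  by rewrite mulnDl exprD exprM mulnC exprM.
rewrite mulnC exprM -/g.
move: (f ^+ a * e ^+ c) (g ^+ c) => P Q.
clearbody e f g; field.
by rewrite mulN1r !subr_eq0 !(eq_sym 1) x_neq1 xa_neq1 xd_neq1 xb_neq1 f_neq0.
Qed.

Lemma NR_gapsE L : (a * (a + d) <= L)%N ->
  NR a d s = [set` [seq n <- index_iota 0 L | ~~ representableb n]].
Proof.
move=> le_L; apply/seteqP; split => n; rewrite /NR /= mem_filter mem_index_iota /=.
  move=> [_ not_rep]; have /negP nrep : ~ representableb n by move/representableP.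
  rewrite nrep ltnNge; apply: contra nrep => /(leq_trans le_L).
  exact: representableb_large.
move=> /andP[nrep _]; split; last by move/representableP; apply/negP.
by case: n nrep => //; rewrite representableb0.
Qed.

Lemma Spow_gapsE (R : realType) L m : (a * (a + d) <= L)%N ->
  Spow R a d s m = \sum_(0 <= n < L | ~~ representableb n) n%:R ^+ m.
Proof.
move=> le_L; rewrite /Spow (NR_gapsE le_L) -fsbig_seq ?big_filter //.
by rewrite filter_uniq // iota_uniq.
Qed.

End Representability.

Lemma cvg_egf_power_sums (R : realType) (I : Type) (r : seq I) (P : pred I)
    (u : I -> R) (S : nat -> R) (z : R) :
  (forall m, S m = \sum_(i <- r | P i) u i ^+ m) ->
  [series S m * z ^+ m / (m`!)%:R]_m @ \oo --> \sum_(i <- r | P i) expR (u i * z).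
Proof.
move=> S_eq.
have -> : [series S m * z ^+ m / (m`!)%:R]_m =
    (fun N => \sum_(i <- r | P i) series (exp_coeff (u i * z)) N).
  apply/funext => N; rewrite /series /= exchange_big /=; apply: eq_bigr => m _.
  rewrite S_eq !big_distrl /=; apply: eq_bigr => i _.
  by rewrite exp_coeffE /= exprMn; ring.
by apply: cvg_big => [|i _]; [exact: add_continuous | exact: is_cvg_series_exp_coeff].
Qed.

Lemma expRX_neq1 (R : realType) (z : R) k :
  z != 0 -> (0 < k)%N -> expR z ^+ k != 1.
Proof.
move=> z_neq0 k_gt0; rewrite -expRM_natl -[X in _ != X]expR0 (inj_eq (@expR_inj R)).
by rewrite mulf_eq0 pnatr_eq0 negb_or -lt0n k_gt0.
Qed.

Theorem mainTheorem4 (R : realType) (a d s : nat)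
  (ha : (2 <= a)%N) (hd : (1 <= d)%N) (hcop : coprime a d)
  (hs1 : (1 <= s)%N) (hsa : (s < a)%N) (z : R) (hz : z != 0) :
  let b := (a + s * d)%N in
  let cb : R := (Num.ceil (((b - 1)%N)%:R / s%:R : R))%:~R in
  let ca : R := (Num.ceil (((a - 1)%N)%:R / s%:R : R))%:~R in
  [series Spow R a d s m * z ^+ m / (m`!)%:R]_m @ \oo -->
    (expR (cb * a%:R * z) - 1) / ((expR (d%:R * z) - 1) * (expR (a%:R * z) - 1))
  + (expR (ca * b%:R * z) - 1) / ((expR (- (d%:R * z)) - 1) * (expR (b%:R * z) - 1))
  - 1 / (expR z - 1).
Proof.
move=> b cb ca.
have a_gt0 : (0 < a)%N by apply: ltnW.
have xk_neq1 k : (0 < k)%N -> expR z ^+ k != 1 by exact: expRX_neq1.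
have x_neq1 : expR z != 1 by rewrite -[expR z]expr1 xk_neq1.
have gap_sum := gap_genpoly_closed_form a_gt0 hs1 hcop (leqnn (a * (a + d)))
  (lt0r_neq0 (expR_gt0 z)) x_neq1 (xk_neq1 _ a_gt0) (xk_neq1 _ hd)
  (xk_neq1 b (ltn_addr _ a_gt0)).
rewrite /cb /ca !ceil_natr_div // -!natrM expRN !expRM_natl /b -gap_sum.
under eq_bigr do rewrite -expRM_natl.
by apply: cvg_egf_power_sums => m; exact: Spow_gapsE.
Qed.
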